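(* For every $D \in \Omega_n$, $n - 1 \le r_{\mathcal{S}_2}(D)^2 \le 2n$.
   Context: $\Omega_n$ denotes the set of $n\times n$ doubly stochastic matrices (nonnegative real entries, all row and column sums equal to $1$). $\|\cdot\|_{\mathcal{S}_2}$ is the Frobenius norm. For $A\in M_n(\mathbb{R})$, $r_{\mathcal{S}_2}(A) := \max_{B\in\Omega_n}\|A-B\|_{\mathcal{S}_2}$. *)

From HB Require Import structures.
From mathcomp Require Import all_boot all_order all_algebra.
From mathcomp Require Import classical_sets reals.
Set Implicit Arguments. Unset Strict Implicit. Unset Printing Implicit Defensive.
Import Order.TTheory GRing.Theory Num.Theory.
Local Open Scope ring_scope.

Definition doubly_stochastic {R : realType} {n : nat} (B : 'M[R]_n) : Prop :=
  (forall i j, 0 <= B i j) /\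
  (forall i, \sum_j B i j = 1) /\
  (forall j, \sum_i B i j = 1).

Definition frob {R : realType} {m n : nat} (A : 'M[R]_(m, n)) : R :=
  Num.sqrt (\sum_i \sum_j A i j ^+ 2).

(* r_{S_2}(A) = max_{B in Omega_n} ||A - B||_{S_2}; the maximum exists
   (Omega_n is compact and nonempty), so it equals the supremum. *)
Local Open Scope classical_set_scope.
Definition rS2 {R : realType} {n : nat} (A : 'M[R]_n) : R :=
  reals.sup [set x : R | exists B : 'M[R]_n, doubly_stochastic B /\ x = frob (A - B)].

From HB Require Import structures.
From mathcomp Require Import all_boot all_order all_algebra.
From mathcomp Require Import classical_sets reals.
From mathcomp Require Import fingroup perm ring lra.
Set Implicit Arguments. Unset Strict Implicit. Unset Printing Implicit Defensive.
Import Order.TTheory GRing.Theory Num.Theory.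
Local Open Scope ring_scope.

(* Upper bound: for entries in [0, 1], (d - b)^2 <= d + b, and the entries of
   two doubly stochastic matrices add up to 2n.  Lower bound: the n cyclic
   shift permutation matrices P_k have <D, P_k> summing to n over k, so some
   P_k has <D, P_k> <= 1; then
   ||D - P_k||^2 = ||D||^2 - 2 <D, P_k> + n >= 1 - 2 + n,
   since ||D||^2 >= (sum of entries)^2 / n^2 = 1 by Cauchy-Schwarz. *)

Lemma sqr_subr_le_addr (R : realDomainType) (x y : R) :
  0 <= x <= 1 -> 0 <= y <= 1 -> (x - y) ^+ 2 <= x + y.
Proof. by move=> /andP[? ?] /andP[? ?]; nra. Qed.

Section DoublyStochastic.
Variable R : realType.

Lemma frob_sqr m n (A : 'M[R]_(m, n)) : frob A ^+ 2 = \sum_i \sum_j A i j ^+ 2.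
Proof.
by rewrite sqr_sqrtr // sumr_ge0 // => i _; rewrite sumr_ge0 // => j _; rewrite sqr_ge0.
Qed.

Lemma doubly_stochastic_le1 n (B : 'M[R]_n) :
  doubly_stochastic B -> forall i j, B i j <= 1.
Proof.
move=> [B_ge0 [B_row _]] i j; rewrite -(B_row i) (bigD1 j) //= lerDl.
by rewrite sumr_ge0.
Qed.

Lemma frob_sub_doubly_stochastic_le n (A B : 'M[R]_n) :
  doubly_stochastic A -> doubly_stochastic B ->
  frob (A - B) <= Num.sqrt (2 * n%:R).
Proof.
move=> dsA dsB; rewrite /frob ler_sqrt ?mulr_ge0 //.
have [A_ge0 [A_row _]] := dsA; have [B_ge0 [B_row _]] := dsB.
have -> : 2 * n%:R = \sum_(i < n) \sum_(j < n) (A i j + B i j).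
  rewrite (eq_bigr (fun => 2)) => [|i _]; last by rewrite big_split /= A_row B_row.
  by rewrite sumr_const card_ord mulr_natr.
apply: ler_sum => i _; apply: ler_sum => j _; rewrite !mxE.
by apply: sqr_subr_le_addr; rewrite ?A_ge0 ?B_ge0 doubly_stochastic_le1.
Qed.

Lemma frob_doubly_stochastic_ge1 n (D : 'M[R]_n) :
  (0 < n)%N -> doubly_stochastic D -> 1 <= frob D ^+ 2.
Proof.
move=> n_gt0 [_ [D_row _]]; set c := n%:R^-1 : R.
have cn : c * n%:R = 1 by rewrite mulVf // pnatr_eq0 -lt0n.
(* (d - c)^2 >= 0 with c = 1/n, summed over the n^2 entries *)
have sum_tangent : \sum_(i < n) \sum_(j < n) (2 * c * D i j - c ^+ 2) = 1.
  rewrite (eq_bigr (fun => 2 * c - c)) => [|i _].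
    by rewrite sumr_const card_ord -[RHS]cn -mulr_natr; ring.
  rewrite big_split /= -mulr_sumr D_row sumrN sumr_const card_ord.
  by rewrite mulr1 expr2 -mulrnAr -[c *+ n]mulr_natr cn mulr1.
rewrite frob_sqr -sum_tangent; apply: ler_sum => i _; apply: ler_sum => j _.
by have := sqr_ge0 (D i j - c); rewrite sqrrB; lra.
Qed.

Lemma sum_delta_perm n (s : 'S_n) i (f : 'I_n -> R) :
  \sum_j (s i == j)%:R * f j = f (s i).
Proof.
rewrite (bigD1 (s i)) //= eqxx mul1r big1 ?addr0 // => j.
by rewrite eq_sym => /negbTE ->; rewrite mul0r.
Qed.

Lemma perm_mx_doubly_stochastic n (s : 'S_n) :
  doubly_stochastic (perm_mx s : 'M[R]_n).
Proof.
split; [|split] => [i j|i|j]; first by rewrite !mxE ler0n.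
  rewrite -[RHS](sum_delta_perm s i (fun => 1)).
  by apply: eq_bigr => j _; rewrite !mxE mulr1.
rewrite (reindex_inj (@perm_inj _ s^-1%g)) -[RHS](sum_delta_perm 1%g j (fun => 1)).
by apply: eq_bigr => i _; rewrite !mxE permKV perm1 mulr1 eq_sym.
Qed.

Lemma frob_sub_perm_mx n (D : 'M[R]_n) (s : 'S_n) :
  frob (D - perm_mx s) ^+ 2 = frob D ^+ 2 - 2 * \sum_i D i (s i) + n%:R.
Proof.
have -> : n%:R = \sum_(i < n) 1 :> R by rewrite sumr_const card_ord.
rewrite !frob_sqr mulr_sumr -sumrB -big_split /=.
apply: eq_bigr => i _.
rewrite (eq_bigr (fun j => D i j ^+ 2 - 2 * ((s i == j)%:R * D i j)
                           + (s i == j)%:R * 1)) => [|j _].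
  by rewrite !big_split /= sumrN -mulr_sumr !sum_delta_perm.
by rewrite !mxE; case: eqP => _ /=; ring.
Qed.

Lemma exists_perm_trace_le1 n (D : 'M[R]_n) :
  doubly_stochastic D -> exists s : 'S_n, \sum_i D i (s i) <= 1.
Proof.
case: n D => [|m] D [_ [D_row _]].
  by exists 1%g; rewrite big_ord0 ler01.
pose shift (k : 'I_m.+1) : 'S_m.+1 := perm (addIr k).
(* the cyclic shifts cover every entry exactly once *)
have sum_shifts : \sum_k \sum_i D i (shift k i) = \sum_(k < m.+1) 1.
  rewrite exchange_big; apply: eq_bigr => i _; rewrite -(D_row i).
  by rewrite [RHS](reindex_inj (addrI i)); apply: eq_bigr => k _; rewrite permE.
have /existsP[k k_le1] : [exists k, \sum_i D i (shift k i) <= 1].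
  apply/contraT; rewrite negb_exists => /forallP all_gt1.
  move/eqP: sum_shifts; rewrite eq_sym lt_eqF //.
  apply: ltr_sum => [|k _]; last by rewrite ltNge all_gt1.
  by apply/hasP; exists ord0; rewrite ?mem_index_enum.
by exists (shift k).
Qed.

Lemma exists_perm_frob_sub_ge n (D : 'M[R]_n) : doubly_stochastic D ->
  exists s : 'S_n, n%:R - 1 <= frob (D - perm_mx s) ^+ 2.
Proof.
move=> dsD; have [s trace_le1] := exists_perm_trace_le1 dsD; exists s.
case: n D s dsD trace_le1 => [|m] D s dsD trace_le1.
  by rewrite sub0r (le_trans _ (sqr_ge0 _)) // lerN10.
rewrite frob_sub_perm_mx; have := frob_doubly_stochastic_ge1 (ltn0Sn m) dsD; lra.
Qed.

Local Open Scope classical_set_scope.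

Lemma rS2_le n (D : 'M[R]_n) : doubly_stochastic D -> rS2 D <= Num.sqrt (2 * n%:R).
Proof.
move=> dsD; apply: ge_sup; first by exists (frob (D - D)), D.
by move=> _ [B [dsB ->]]; exact: frob_sub_doubly_stochastic_le.
Qed.

Lemma frob_sub_le_rS2 n (D B : 'M[R]_n) :
  doubly_stochastic D -> doubly_stochastic B -> frob (D - B) <= rS2 D.
Proof.
move=> dsD dsB; apply: ub_le_sup; last by exists B.
exists (Num.sqrt (2 * n%:R)) => _ [B' [dsB' ->]].
exact: frob_sub_doubly_stochastic_le.
Qed.

End DoublyStochastic.

Theorem mainTheorem5 (R : realType) (n : nat) (D : 'M[R]_n) :
  doubly_stochastic D ->
  n%:R - 1 <= rS2 D ^+ 2 /\ rS2 D ^+ 2 <= 2 * n%:R.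
Proof.
move=> dsD; have [s frob_ge] := exists_perm_frob_sub_ge dsD.
have frob_le := frob_sub_le_rS2 dsD (perm_mx_doubly_stochastic _ s).
have rS2_ge0 : 0 <= rS2 D := le_trans (sqrtr_ge0 _) frob_le.
split.
- by apply: le_trans frob_ge _; rewrite ler_sqr ?nnegrE ?sqrtr_ge0.
- by rewrite -[2 * _]sqr_sqrtr ?mulr_ge0 // ler_sqr ?nnegrE ?sqrtr_ge0 ?rS2_le.
Qed.
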